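(* Let $\widehat\Psi\in\mathcal P_c(Y)$. There exists an increasing continuous function $R:[0,+\infty)\to[0,+\infty)$ such that for every $T\ge0$, every $k$ and every $t\in[0,T]$, $\Psi^k(t),\ \underline\Psi^k(t),\ \widetilde\Psi^k(t)\in\mathcal P(B^Y_{R(T)})$, where these are the curves of the Markov alternate scheme started at $\widehat\Psi$.
   Context: Markov setting. Fix $n\ge2$, $d\ge1$. $\Lambda_n:=\{\lambda\in\mathbb R^n:\lambda_h>0,\ \sum_h\lambda_h=1\}$, $\overline\Lambda_n$ its closure, identified with $\mathcal P(U)$ for $U:=\{e_1,\dots,e_n\}\subset\mathbb R^n$. $Y:=\mathbb R^d\times\overline\Lambda_n$ with norm $\|(x,\lambda)\|:=|x|+\|\lambda\|_{\mathrm{BL}}$, $\|\mu\|_{\mathrm{BL}}:=\sup\{\sum_h\mu_h\varphi(e_h):\|\varphi\|_\infty+\mathrm{Lip}(\varphi)\le1\}$; $B_R:=\{|x|\le R\}\subset\mathbb R^d$, $B^Y_R:=\{y\in Y:\|y\|\le R\}$. $\mathcal P_1(Y)$, $\mathcal P_c(Y)$, $\mathcal P(K)$: probability measures with finite first moment, compact support, support in $K$; $W_1$ the Kantorovich–Rubinstein distance for $\|\cdot\|$; $m_1(\Psi):=\int\|y\|d\Psi$. A map $\mathcal Q:\mathbb R^d\times\mathcal P_1(Y)\to\mathbb R^{n\times n}$ satisfies (Q0) $\mathcal Q_{h\ell}\ge0$ for $h\ne\ell$, $\mathcal Q_{hh}=-\sum_{\ell\ne h}\mathcal Q_{\ell h}$;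 (Q1) there is a unique $\sigma(x,\Psi)\in\Lambda_n$ with $\mathcal Q_{h\ell}\sigma_\ell=\mathcal Q_{\ell h}\sigma_h$; (Q2) $|\mathcal Q(x_1,\Psi_1)-\mathcal Q(x_2,\Psi_2)|\le L_{\mathcal Q,R}(|x_1-x_2|+W_1(\Psi_1,\Psi_2))$ for $x_i\in B_R$, $\Psi_i\in\mathcal P(B^Y_R)$; (Q3) $|\mathcal Q(x,\Psi)|\le M_{\mathcal Q}(1+|x|+m_1(\Psi))$. Velocity fields $v_\Psi:Y\to\mathbb R^d$ satisfy (v1) $|v_\Psi(y_1)-v_\Psi(y_2)|\le L_{v,R}\|y_1-y_2\|$ for $y_i\in B^Y_R$, $\Psi\in\mathcal P(B^Y_R)$; (v2) $|v_{\Psi_1}(y)-v_{\Psi_2}(y)|\le L_{v,R}W_1(\Psi_1,\Psi_2)$ for $\Psi_i\in\mathcal P(B^Y_R)$, $y\in B^Y_R$; (v3) $|v_\Psi(y)|\le M_v(1+\|y\|+m_1(\Psi))$. $E(x,\lambda,\Psi):=\sum_h\lambda_h\ln(\lambda_h/\sigma_h(x,\Psi))$; $\Phi(a,b):=\frac{a-b}{\ln a-\ln b}$, $\Phi(a,a):=a$; $K(x,\lambda,\Psi):=\sum_{\ell=2}^n\sum_{h<\ell}\mathcal Q_{h\ell}\sigma_\ell\Phi(\lambda_h/\sigma_h,\lambda_\ell/\sigma_\ell)(e_h-e_\ell)\otimes(e_h-e_\ell)$; $G$ its inverse on $\mathbb R^n_0:=\{\sum\xi_h=0\}$; $\mathsf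 d_{(x,\Psi)}(\lambda_1,\lambda_2):=\inf\{\int_0^1\langle G(x,\rho,\Psi)\rho',\rho'\rangle^{1/2}ds:\rho\in C^1([0,1];\Lambda_n),\rho(0)=\lambda_1,\rho(1)=\lambda_2\}$; $E$ and $\mathsf d$ are extended continuously to $\overline\Lambda_n$. Markov alternate scheme. Let $\tau_k>0$, $\tau_k\to0$, $t^k_i:=i\tau_k$ ($i\in\mathbb N$), $\Psi^k_0:=\widehat\Psi$. Given $\Psi^k_i$, for $(x,\lambda)\in Y$ let $\lambda^{\mathrm{new}}(x,\lambda)$ be a minimizer (measurably selected) of $\rho\mapsto E(x,\rho,\Psi^k_i)+\frac1{2\tau_k}\mathsf d^2_{(x,\Psi^k_i)}(\rho,\lambda)$ over $\overline\Lambda_n$; for $t\in[t^k_i,t^k_{i+1}]$: $\Lambda^k_{i+1}(t,x,\lambda):=\lambda+\frac{t-t^k_i}{\tau_k}(\lambda^{\mathrm{new}}(x,\lambda)-\lambda)$; $\widetilde\Psi^k_{i+1}:=$ push-forward of $\Psi^k_i$ under $(x,\lambda)\mapsto(x,\Lambda^k_{i+1}(t^k_{i+1},x,\lambda))$; $X^k_{i+1}(t,x,\lambda):=x+(t-t^k_i)v_{\widetilde\Psi^k_{i+1}}(x,\Lambda^k_{i+1}(t^k_{i+1},x,\lambda))$; $\Psi^k(t):=(X^k_{i+1}(t,\cdot),\Lambda^k_{i+1}(t,\cdot))_\#\Psi^k_i$, $\Psi^k_{i+1}:=\Psi^k(t^k_{i+1})$; $\widetilde\Psi^k(t):=\widetilde\Psi^k_{i+1}$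 on $(t^k_i,t^k_{i+1}]$, $\underline\Psi^k(t):=\Psi^k_i$ on $[t^k_i,t^k_{i+1})$. *)

From HB Require Import structures.
From mathcomp Require Import all_boot all_order all_algebra.
From mathcomp Require Import all_classical all_reals all_analysis.
Set Implicit Arguments. Unset Strict Implicit. Unset Printing Implicit Defensive.
Import Order.TTheory GRing.Theory Num.Theory.
Import numFieldNormedType.Exports.
Local Open Scope classical_set_scope.
Local Open Scope ring_scope.

Section MarkovScheme.
Variables (R : realType) (d n : nat).

Definition enorm m (x : 'rV[R]_m) : R := Num.sqrt (\sum_(i < m) x ord0 i ^+ 2).

(* Frobenius norm of an n x n matrix (any matrix norm: all are equivalent). *)
Definition mnorm (M : 'M[R]_n) : R := Num.sqrt (\sum_(i < n) \sum_(j < n) M i j ^+ 2).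

Definition ev (h : 'I_n) : 'rV[R]_n := delta_mx ord0 h.

Definition simplex (l : 'rV[R]_n) : Prop :=
  (forall h, 0 < l ord0 h) /\ \sum_(h < n) l ord0 h = 1.
Definition csimplex (l : 'rV[R]_n) : Prop :=
  (forall h, 0 <= l ord0 h) /\ \sum_(h < n) l ord0 h = 1.

(* || phi ||_oo + Lip(phi) for phi : U -> R, U = {e_1,...,e_n} *)
Definition phi_supnorm (phi : 'I_n -> R) : R := \big[Num.max/0]_(h < n) `|phi h|.
Definition phi_lip (phi : 'I_n -> R) : R :=
  \big[Num.max/0]_(h < n) \big[Num.max/0]_(l < n | l != h)
     (`|phi h - phi l| / enorm (ev h - ev l)).

(* bounded-Lipschitz norm of a (signed) measure mu on U, seen as a vector *)
Definition blnorm (mu : 'rV[R]_n) : R :=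
  sup [set s | exists phi : 'I_n -> R,
        phi_supnorm phi + phi_lip phi <= 1 /\ s = \sum_(h < n) mu ord0 h * phi h].

(* ambient type of Y = R^d x closure(Lambda_n) *)
Definition Yt := ('rV[R]_d * 'rV[R]_n)%type.
Definition Yset : set Yt := [set y | csimplex y.2].
Definition ynorm (y : Yt) : R := enorm y.1 + blnorm y.2.
Definition ydist (y1 y2 : Yt) : R := enorm (y1.1 - y2.1) + blnorm (y1.2 - y2.2).
Definition ballR (r : R) : set 'rV[R]_d := [set x | enorm x <= r].
Definition ballY (r : R) : set Yt := [set y | ynorm y <= r].

Definition Ym := g_sigma_algebraType (@open Yt).
Definition Prob := probability Ym R.

Definition supported_in (P : Prob) (K : set Yt) : Prop := P (~` K) = 0%E.
(* P in P(Y) and P in P(K) for K subset of Y *)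
Definition inPY (P : Prob) : Prop := supported_in P Yset.
Definition inPK (P : Prob) (K : set Yt) : Prop := supported_in P (Yset `&` K).
Definition m1e (P : Prob) : \bar R := (\int[P]_y (ynorm y)%:E)%E.
Definition m1 (P : Prob) : R := fine (m1e P).
Definition inP1 (P : Prob) : Prop := inPY P /\ (m1e P < +oo)%E.
(* compact support in Y (compact subsets of Y are exactly the closed bounded ones) *)
Definition inPc (P : Prob) : Prop := inPY P /\ exists r : R, inPK P (ballY r).

(* Kantorovich-Rubinstein distance (dual formulation) for the norm of Y *)
Definition W1 (P1 P2 : Prob) : R :=
  sup [set s | exists f : Ym -> R, measurable_fun [set: Ym] f /\
        (forall y1 y2 : Yt, Yset y1 -> Yset y2 -> `|f y1 - f y2| <= ydist y1 y2) /\
        s = Rintegral P1 [set: Ym] f - Rintegral P2 [set: Ym] f].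

Variable Q : 'rV[R]_d -> Prob -> 'M[R]_n.

Definition detailed_balance (x : 'rV[R]_d) (P : Prob) (s : 'rV[R]_n) : Prop :=
  forall h l, Q x P h l * s ord0 l = Q x P l h * s ord0 h.
(* sigma(x, Psi): the unique element of Lambda_n given by (Q1) *)
Definition sigma (x : 'rV[R]_d) (P : Prob) : 'rV[R]_n :=
  xget 0 [set s | simplex s /\ detailed_balance x P s].

(* relative entropy; with mathcomp's ln 0 = 0 this is already the continuous
   extension to the closed simplex (0 ln 0 = 0) *)
Definition Ent (x : 'rV[R]_d) (l : 'rV[R]_n) (P : Prob) : R :=
  \sum_(h < n) l ord0 h * ln (l ord0 h / sigma x P ord0 h).

Definition logmean (a b : R) : R := if a == b then a else (a - b) / (ln a - ln b).

Definition Kmat (x : 'rV[R]_d) (l : 'rV[R]_n) (P : Prob) : 'M[R]_n :=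
  \sum_(l0 < n) \sum_(h < n | (h < l0)%N)
    (Q x P h l0 * sigma x P ord0 l0 *
       logmean (l ord0 h / sigma x P ord0 h) (l ord0 l0 / sigma x P ord0 l0))
    *: ((ev h - ev l0)^T *m (ev h - ev l0)).

(* G = inverse of K on R^n_0 = {sum xi = 0} *)
Definition Gapp (x : 'rV[R]_d) (l : 'rV[R]_n) (P : Prob) (xi : 'rV[R]_n) : 'rV[R]_n :=
  xget 0 [set eta : 'rV[R]_n | \sum_(i < n) eta ord0 i = 0 /\ eta *m Kmat x l P = xi].
Definition quadG (x : 'rV[R]_d) (l : 'rV[R]_n) (P : Prob) (xi : 'rV[R]_n) : R :=
  \sum_(i < n) Gapp x l P xi ord0 i * xi ord0 i.

Definition C1_curve (rho : R -> 'rV[R]_n) : Prop :=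
  (forall s, 0 <= s <= 1 -> simplex (rho s)) /\
  (forall s, 0 <= s <= 1 -> derivable rho s 1) /\
  {within `[0, 1], continuous (derive1 rho)}.

Definition curve_length (x : 'rV[R]_d) (P : Prob) (rho : R -> 'rV[R]_n) : R :=
  Rintegral lebesgue_measure `[0, 1]
    (fun s => Num.sqrt (quadG x (rho s) P (derive1 rho s))).

Definition dist (x : 'rV[R]_d) (P : Prob) (l1 l2 : 'rV[R]_n) : R :=
  inf [set L | exists rho, C1_curve rho /\ rho 0 = l1 /\ rho 1 = l2 /\
                            L = curve_length x P rho].

(* its continuous extension to the closed simplex *)
Definition dbar (x : 'rV[R]_d) (P : Prob) (l1 l2 : 'rV[R]_n) : R :=
  xget 0 [set L | forall e : R, 0 < e -> exists2 del : R, 0 < del &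
     forall m1 m2, simplex m1 -> simplex m2 -> enorm (m1 - l1) < del ->
       enorm (m2 - l2) < del -> `|dist x P m1 m2 - L| < e].

End MarkovScheme.

Section SchemeMaps.
Variables (R : realType) (d n : nat).

Definition tk (tau : nat -> R) (k i : nat) : R := i%:R * tau k.

Definition Lam (tau : nat -> R) (lnew : nat -> nat -> Yt R d n -> 'rV[R]_n)
    (k i : nat) (t : R) (y : Yt R d n) : 'rV[R]_n :=
  y.2 + ((t - tk tau k i) / tau k) *: (lnew k i y - y.2).

(* X^k_{i+1}(t, x, lambda); PsiT k i.+1 is tilde Psi^k_{i+1} *)
Definition Xmap (tau : nat -> R) (lnew : nat -> nat -> Yt R d n -> 'rV[R]_n)
    (v : Prob R d n -> Yt R d n -> 'rV[R]_d) (PsiT : nat -> nat -> Prob R d n)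
    (k i : nat) (t : R) (y : Yt R d n) : 'rV[R]_d :=
  y.1 + (t - tk tau k i) *: v (PsiT k i.+1) (y.1, Lam tau lnew k i (tk tau k i.+1) y).

End SchemeMaps.

(* On Y the norm is ynorm (x, lambda) = |x| + 1, since the
   bounded-Lipschitz norm of a probability vector is 1.  The lambda-update
   does not move x, so it preserves the support ball B^Y_r.  During the
   transport step of length s <= tau, x moves by s |v|, and by (v3)
   |v| <= Mv (1 + 2 r) on measures supported in B^Y_r.  Hence the support
   radius r_i at the grid times satisfies r_{i+1} <= r_i + tau M (1 + 2 r_i),
   an explicit Euler step for r' = M (1 + 2 r), which is dominated by its
   exact solution growth(t) = ((1 + 2 r0) e^{2 M t} - 1) / 2.
   We take R(T) := growth(T) + T (the "+ T" makes it strictly increasing). *)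

From HB Require Import structures.
From mathcomp Require Import all_boot all_order all_algebra.
From mathcomp Require Import all_classical all_reals all_analysis.
From mathcomp Require Import ring lra.
Import Order.TTheory GRing.Theory Num.Theory.
Import numFieldNormedType.Exports.
Local Open Scope classical_set_scope.
Local Open Scope ring_scope.
Set Implicit Arguments. Unset Strict Implicit. Unset Printing Implicit Defensive.

Section BoundedLipschitzNorm.
Variables (R : realType) (n : nat).
Implicit Types (mu nu l : 'rV[R]_n) (phi : 'I_n -> R).

Definition bl_tests mu : set R := [set s | exists phi,
  phi_supnorm phi + phi_lip phi <= 1 /\ s = \sum_(h < n) mu ord0 h * phi h].

Lemma bigmax_eq0 (I : finType) (P : pred I) (F : I -> R) :
  (forall i, P i -> F i = 0) -> \big[Num.max/0]_(i | P i) F i = 0.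
Proof. by move=> F0; apply: (big_ind (eq^~ 0)) => // x y -> ->; rewrite maxxx. Qed.

Lemma bl_test_le1 phi : phi_supnorm phi + phi_lip phi <= 1 -> forall h, `|phi h| <= 1.
Proof.
move=> phi1 h.
have lip0 : 0 <= phi_lip phi by apply/bigmax_geP; left.
have sup_h : `|phi h| <= phi_supnorm phi by apply/bigmax_geP; right; exists h.
lra.
Qed.

Lemma bl_test_le_l1 mu s : bl_tests mu s -> s <= \sum_(h < n) `|mu ord0 h|.
Proof.
move=> [phi [phi1 ->]]; apply: ler_sum => h _.
by rewrite (le_trans (ler_norm _)) // normrM ler_piMr // bl_test_le1.
Qed.

Lemma bl_tests_ub mu : has_ubound (bl_tests mu).
Proof. by exists (\sum_(h < n) `|mu ord0 h|) => s /bl_test_le_l1. Qed.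

Lemma bl_tests0 mu : bl_tests mu 0.
Proof.
exists (fun=> 0); split; last by rewrite big1 // => h _; rewrite mulr0.
rewrite /phi_supnorm /phi_lip !bigmax_eq0 ?addr0 // => h _.
- by rewrite bigmax_eq0 // => l _; rewrite subr0 normr0 mul0r.
- by rewrite normr0.
Qed.

Lemma blnorm_ge0 mu : 0 <= blnorm mu.
Proof. exact: (ub_le_sup (bl_tests_ub mu) (bl_tests0 mu)). Qed.

Lemma blnorm_le_l1 mu : blnorm mu <= \sum_(h < n) `|mu ord0 h|.
Proof. by apply: ge_sup; [exists 0; exact: bl_tests0 | move=> s /bl_test_le_l1]. Qed.

Lemma blnorm_lip mu nu :
  blnorm mu <= blnorm nu + \sum_(h < n) `|mu ord0 h - nu ord0 h|.
Proof.
apply: ge_sup => [|_ [phi [phi1 ->]]]; first by exists 0; exact: bl_tests0.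
have -> : \sum_(h < n) mu ord0 h * phi h = \sum_(h < n) nu ord0 h * phi h
    + \sum_(h < n) (mu ord0 h - nu ord0 h) * phi h.
  by rewrite -big_split /=; apply: eq_bigr => h _; rewrite -mulrDl addrC subrK.
apply: lerD; first by apply: (ub_le_sup (bl_tests_ub nu)); exists phi.
apply: ler_sum => h _.
by rewrite (le_trans (ler_norm _)) // normrM ler_piMr // bl_test_le1.
Qed.

(* A probability vector has bounded-Lipschitz norm 1 (test with phi = 1). *)
Lemma blnorm_csimplex l : (0 < n)%N -> csimplex l -> blnorm l = 1.
Proof.
move=> n_gt0 [l_ge0 l_sum]; apply/le_anti/andP; split.
  rewrite (le_trans (blnorm_le_l1 l)) // -l_sum le_eqVlt; apply/orP; left.
  by apply/eqP/eq_bigr => h _; rewrite ger0_norm.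
apply: (ub_le_sup (bl_tests_ub l)); exists (fun=> 1); split; last first.
  by rewrite -{1}l_sum; apply: eq_bigr => h _; rewrite mulr1.
have -> : phi_lip (fun _ : 'I_n => 1 : R) = 0.
  rewrite /phi_lip bigmax_eq0 // => h _; rewrite bigmax_eq0 // => k _.
  by rewrite subrr normr0 mul0r.
by rewrite addr0; apply/bigmax_leP; split => // h _; rewrite normr1.
Qed.

End BoundedLipschitzNorm.

Section EuclideanNorm.
Variables (R : realType) (m : nat).
Implicit Types (x y : 'rV[R]_m).

Lemma enorm_ge0 x : 0 <= enorm x.
Proof. exact: sqrtr_ge0. Qed.

Lemma coord_le_enorm x j : `|x ord0 j| <= enorm x.
Proof.
rewrite -sqrtr_sqr /enorm ler_wsqrtr // (bigD1 j) //= lerDl.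
by apply: sumr_ge0 => i _; exact: sqr_ge0.
Qed.

Lemma sum_sq_le_sq_sum (F : 'I_m -> R) : (forall i, 0 <= F i) ->
  \sum_(i < m) F i ^+ 2 <= (\sum_(i < m) F i) ^+ 2.
Proof.
elim: m F => [|k IH] F F_ge0; first by rewrite !big_ord0 expr0n.
rewrite !big_ord_recr /=.
have := IH (fun i => F (widen_ord (leqnSn k) i)) (fun i => F_ge0 _).
have : 0 <= \sum_(i < k) F (widen_ord (leqnSn k) i) by apply: sumr_ge0.
have := F_ge0 ord_max; rewrite sqrrD; nra.
Qed.

Lemma enorm_le_l1 x : enorm x <= \sum_(i < m) `|x ord0 i|.
Proof.
have l1_ge0 : 0 <= \sum_(i < m) `|x ord0 i| by apply: sumr_ge0.
rewrite -(ger0_norm l1_ge0) -sqrtr_sqr /enorm ler_wsqrtr //.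
apply: le_trans (sum_sq_le_sq_sum (fun i => normr_ge0 (x ord0 i))).
by apply: ler_sum => i _; rewrite real_normK // num_real.
Qed.

Lemma enormZ (a : R) x : enorm (a *: x) = `|a| * enorm x.
Proof.
rewrite /enorm (eq_bigr (fun i => a ^+ 2 * x ord0 i ^+ 2)); last first.
  by move=> i _; rewrite mxE exprMn.
by rewrite -mulr_sumr sqrtrM ?sqr_ge0 // sqrtr_sqr.
Qed.

Lemma enorm_sqr x : enorm x ^+ 2 = \sum_(i < m) x ord0 i ^+ 2.
Proof. by rewrite sqr_sqrtr // sumr_ge0 // => i _; exact: sqr_ge0. Qed.

Lemma enorm_eq0_coord x : enorm x = 0 -> forall i, x ord0 i = 0.
Proof.
by move=> x0 i; apply/normr0_eq0/le_anti; rewrite normr_ge0 -x0 coord_le_enorm.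
Qed.

(* The Cauchy-Schwarz inequality, from 2ab x_i y_i <= b^2 x_i^2 + a^2 y_i^2
   with a = enorm x and b = enorm y. *)
Lemma cauchy_schwarz x y :
  \sum_(i < m) x ord0 i * y ord0 i <= enorm x * enorm y.
Proof.
have [a0|a_neq0] := eqVneq (enorm x) 0.
  by rewrite a0 mul0r big1 // => i _; rewrite enorm_eq0_coord // mul0r.
have [b0|b_neq0] := eqVneq (enorm y) 0.
  by rewrite b0 mulr0 big1 // => i _; rewrite (enorm_eq0_coord b0) mulr0.
have ab_gt0 : 0 < enorm x * enorm y by rewrite mulr_gt0 // lt0r ?enorm_ge0 ?andbT.
have termwise : \sum_(i < m) (2 * enorm x * enorm y) * (x ord0 i * y ord0 i)
    <= \sum_(i < m) (enorm y ^+ 2 * x ord0 i ^+ 2 + enorm x ^+ 2 * y ord0 i ^+ 2).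
  apply: ler_sum => i _.
  have := sqr_ge0 (enorm y * x ord0 i - enorm x * y ord0 i); rewrite sqrrB; nra.
move: termwise; rewrite -mulr_sumr big_split /= -!mulr_sumr -!enorm_sqr.
set S := \sum_(i < m) _; nra.
Qed.

Lemma enormD x y : enorm (x + y) <= enorm x + enorm y.
Proof.
have sum_ge0 : 0 <= enorm x + enorm y by rewrite addr_ge0 ?enorm_ge0.
rewrite -(ger0_norm sum_ge0) -sqrtr_sqr ler_wsqrtr // (eq_bigr (fun i =>
    x ord0 i ^+ 2 + y ord0 i ^+ 2 + 2 * (x ord0 i * y ord0 i))); last first.
  by move=> i _; rewrite mxE sqrrD -mulr_natl mulrA; ring.
rewrite !big_split /= -mulr_sumr -!enorm_sqr sqrrD -mulr_natr.
have := cauchy_schwarz x y; lra.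
Qed.

Lemma enorm_le_add_dist x y : enorm x <= enorm y + enorm (x - y).
Proof. by have := enormD y (x - y); rewrite addrC subrK. Qed.

End EuclideanNorm.

Section Measurability.
Variables (R : realType) (d n : nat).
Local Notation Y := (Yt R d n).
Local Notation YM := (Ym R d n).

(* The l1 distance on the coordinates of Y; the balls of the (product)
   topology of Y are contained in l1 balls of comparable radius. *)
Definition l1dist (y z : Y) : R :=
  \sum_(j < d) `|z.1 ord0 j - y.1 ord0 j| + \sum_(h < n) `|z.2 ord0 h - y.2 ord0 h|.

Lemma l1dist_ge0 y z : 0 <= l1dist y z.
Proof. by rewrite addr_ge0 // sumr_ge0. Qed.

Lemma ball_coord (y z : Y) e : ball y e z ->
  (forall j, `|z.1 ord0 j - y.1 ord0 j| < e) /\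
  (forall h, `|z.2 ord0 h - y.2 ord0 h| < e).
Proof.
rewrite /ball /= => -[[_ B1] [_ B2]]; split => j.
  by have := B1 ord0 j; rewrite /ball /= distrC.
by have := B2 ord0 j; rewrite /ball /= distrC.
Qed.

Lemma l1dist_ball (y z : Y) e : ball y e z -> l1dist y z <= (d + n)%:R * e.
Proof.
move=> /ball_coord [B1 B2]; rewrite natrD mulrDl /l1dist.
apply: lerD.
  rewrite (le_trans (ler_sum _ (fun j _ => ltW (B1 j)))) //.
  by rewrite sumr_const card_ord mulr_natl.
rewrite (le_trans (ler_sum _ (fun j _ => ltW (B2 j)))) //.
by rewrite sumr_const card_ord mulr_natl.
Qed.

Lemma enorm_fst_le_l1dist (y z : Y) : enorm (z.1 - y.1) <= l1dist y z.
Proof.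
apply: le_trans (enorm_le_l1 _) _; rewrite /l1dist.
rewrite (eq_bigr (fun j => `|z.1 ord0 j - y.1 ord0 j|)); last by move=> j _; rewrite !mxE.
by rewrite lerDl sumr_ge0.
Qed.

Lemma l1_snd_le_l1dist (y z : Y) :
  \sum_(h < n) `|z.2 ord0 h - y.2 ord0 h| <= l1dist y z.
Proof. by rewrite /l1dist lerDr sumr_ge0. Qed.

Lemma ydist_le_l1dist (y z : Y) : ydist z y <= l1dist y z.
Proof.
rewrite /ydist /l1dist; apply: lerD.
  rewrite (le_trans (enorm_le_l1 _)) // le_eqVlt; apply/orP; left.
  by apply/eqP/eq_bigr => j _; rewrite !mxE.
rewrite (le_trans (blnorm_le_l1 _)) // le_eqVlt; apply/orP; left.
by apply/eqP/eq_bigr => j _; rewrite !mxE.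
Qed.

(* A real function continuous on a measurable set D is Borel measurable on D:
   the preimage of an open interval is D met with a union of open balls. *)
Lemma measurable_fun_continuous_on (D : set Y) (f : Y -> R) :
  measurable (D : set YM) ->
  (forall y, D y -> forall e, 0 < e -> exists2 del, 0 < del &
      forall z, D z -> ball y del z -> `|f z - f y| < e) ->
  measurable_fun (D : set YM) (f : YM -> R).
Proof.
move=> mD f_cont.
apply: (measurability _ (measurable_realfun.RGenOpens.measurableE R)).
move=> _ [_ [a [b ->]] <-].
pose good := [set p : Y * R | D p.1 /\ 0 < p.2 /\
   (forall z, D z -> ball p.1 p.2 z -> a < f z < b)].
have -> : D `&` f @^-1` `]a, b[%classic = D `&` \bigcup_(p in good) ball p.1 p.2.
  apply/seteqP; split => [y [Dy /=]|y [Dy [p [Dp [p_gt0 fp]] bp]]].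
  - rewrite in_itv /= => /andP[ay yb].
    have e_gt0 : 0 < Num.min (f y - a) (b - f y) by rewrite lt_min !subr_gt0 ay yb.
    have [del del_gt0 fdel] := f_cont y Dy _ e_gt0.
    split => //; exists (y, del) => /=; last exact: ballxx.
    split => //; split => // z Dz /(fdel _ Dz); rewrite lt_min !ltr_norml.
    by move=> /andP[/andP[? ?] /andP[? ?]]; apply/andP; split; lra.
  - by split => //=; rewrite in_itv /=; exact: fp.
apply: measurableI => //; apply: sub_sigma_algebra; apply: bigcup_open => p _.
exact: ball_open.
Qed.

Lemma measurable_fun_loclip (D : set Y) (f : Y -> R) :
  measurable (D : set YM) ->
  (forall y, D y -> exists C, exists2 rho, 0 < rho &
      forall z, D z -> ball y rho z -> `|f z - f y| <= C * l1dist y z) ->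
  measurable_fun (D : set YM) (f : YM -> R).
Proof.
move=> mD f_lip; apply: measurable_fun_continuous_on => // y Dy e e_gt0.
have [C [rho rho_gt0 fC]] := f_lip y Dy.
set k : R := (d + n)%:R; have k_ge0 : 0 <= k by [].
have c_gt0 : 0 < (`|C| + 1) * (k + 1) by rewrite mulr_gt0 // ltr_pwDr.
set del := Num.min rho (e / ((`|C| + 1) * (k + 1))).
have del_e : del * ((`|C| + 1) * (k + 1)) <= e by rewrite -ler_pdivlMr // ge_min lexx orbT.
have del_gt0 : 0 < del by rewrite lt_min rho_gt0 divr_gt0.
exists del => // z Dz bz; apply: le_lt_trans (fC z Dz _) _.
  by apply: le_ball bz; rewrite ge_min lexx.
have := l1dist_ball bz; have := l1dist_ge0 y z.
have := ler_norm C; have := normr_ge0 C; rewrite -/k; nra.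
Qed.

Lemma measurable_fst_coord j : measurable_fun [set: YM] (fun y : YM => (y : Y).1 ord0 j).
Proof.
apply: measurable_fun_continuous_on => // y _ e e_gt0.
by exists e => // z _ /ball_coord [B _]; exact: B.
Qed.

Lemma measurable_snd_coord h : measurable_fun [set: YM] (fun y : YM => (y : Y).2 ord0 h).
Proof.
apply: measurable_fun_continuous_on => // y _ e e_gt0.
by exists e => // z _ /ball_coord [_ B]; exact: B.
Qed.

Lemma measurable_enorm_comp m (D : set YM) (f : YM -> 'rV[R]_m) :
  (forall j, measurable_fun D (fun y => f y ord0 j)) ->
  measurable_fun D (fun y => enorm (f y)).
Proof.
move=> f_meas; apply: measurableT_comp.
  exact: measurable_realfun.continuous_measurable_fun (@sqrt_continuous R).
apply: measurable_sum => j; exact: measurable_realfun.measurable_funX.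
Qed.

(* blnorm is 1-Lipschitz for the l1 norm, hence measurable; so is ynorm. *)
Lemma measurable_blnorm_snd : measurable_fun [set: YM] (fun y : YM => blnorm (y : Y).2).
Proof.
apply: measurable_fun_loclip => // y _; exists 1; exists 1 => // z _ _.
rewrite mul1r (le_trans _ (l1_snd_le_l1dist y z)) // ler_norml; apply/andP; split.
  have := blnorm_lip y.2 z.2.
  rewrite (eq_bigr (fun h => `|z.2 ord0 h - y.2 ord0 h|)) => [|h _]; last by rewrite distrC.
  lra.
have := blnorm_lip z.2 y.2; lra.
Qed.

Lemma measurable_ynorm : measurable_fun [set: YM] (fun y : YM => ynorm (y : Y)).
Proof.
apply: measurable_realfun.measurable_funD measurable_blnorm_snd.
exact: measurable_enorm_comp measurable_fst_coord.
Qed.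

Lemma YsetE : @Yset R d n = [set y : Y | \sum_(h < n) y.2 ord0 h = 1] `&`
  \bigcap_(h in [set: 'I_n]) [set y : Y | 0 <= y.2 ord0 h].
Proof.
apply/seteqP; split => y [y_ge0 y_sum].
  by split => //; move=> h _; exact: y_ge0.
by split => // h; exact: y_sum.
Qed.

Lemma measurable_Yset : measurable (@Yset R d n : set YM).
Proof.
have sum_meas : measurable_fun [set: YM] (fun y : YM => \sum_(h < n) (y : Y).2 ord0 h).
  by apply: measurable_sum => h; exact: measurable_snd_coord.
rewrite YsetE; apply: measurableI.
  by have := sum_meas measurableT _ (measurable_set1 1); rewrite setTI.
apply: fin_bigcap_measurable; first exact: finite_finset.
move=> h _; rewrite -[X in measurable X]setTI.
have -> : [set y : Y | 0 <= y.2 ord0 h] = (fun y : YM => (y : Y).2 ord0 h) @^-1` `[0, +oo[.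
  by apply/seteqP; split => y /=; rewrite in_itv /= andbT.
exact: measurable_snd_coord (measurable_itv _).
Qed.

Definition Kb (r : R) : set Y := @Yset R d n `&` @ballY R d n r.

Hypothesis n_gt0 : (0 < n)%N.

Lemma ynorm_Yset (y : Y) : Yset y -> ynorm y = enorm y.1 + 1.
Proof. by move=> Yy; rewrite /ynorm blnorm_csimplex. Qed.

Lemma KbE r : Kb r = @Yset R d n `&` [set y : Y | enorm y.1 + 1 <= r].
Proof.
apply/seteqP; split => y [Yy By]; split => //.
  by rewrite /= -ynorm_Yset.
by rewrite /ballY /= ynorm_Yset.
Qed.

Lemma measurable_Kb r : measurable (Kb r : set YM).
Proof.
rewrite KbE; apply: measurableI; first exact: measurable_Yset.
have := measurable_enorm_comp measurable_fst_coord measurableT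
  (measurable_itv `]-oo, (r - 1)]).
rewrite setTI; congr measurable; apply/seteqP; split => y /=; rewrite in_itv /=; lra.
Qed.

Lemma measurable_nKb r : measurable (~` Kb r : set YM).
Proof. exact: measurableC (measurable_Kb r). Qed.

End Measurability.

Section Support.
Variables (R : realType) (d n : nat).
Hypothesis n_gt0 : (0 < n)%N.
Local Notation Y := (Yt R d n).
Local Notation YM := (Ym R d n).
Local Notation Kb := (@Kb R d n).

Lemma ynorm_ge0 (y : Y) : 0 <= ynorm y.
Proof. by rewrite addr_ge0 ?enorm_ge0 ?blnorm_ge0. Qed.

Lemma null_outside_support (P : Prob R d n) r (A : set YM) :
  measurable A -> A `<=` ~` Kb r -> inPK P (ballY r) -> P A = 0%E.
Proof.
move=> mA A_out P_supp; apply/le_anti; rewrite measure_ge0 andbT -P_supp.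
by apply: le_measure => //; rewrite inE //; exact: measurable_nKb.
Qed.

Lemma inPK_mono {P : Prob R d n} {r r' : R} : r <= r' -> inPK P (ballY r) -> inPK P (ballY r').
Proof.
move=> r_le P_supp; apply: (null_outside_support (r := r)) => //.
  exact: measurable_nKb.
by move=> y /= Ky [Yy By]; apply: Ky; split => //; rewrite /ballY /= in By *; lra.
Qed.

Lemma m1e_le (P : Prob R d n) r : 0 <= r -> inPK P (ballY r) -> (m1e P <= r%:E)%E.
Proof.
move=> r_ge0 P_supp; rewrite /m1e.
rewrite (@ge0_negligible_integral _ _ _ P setT (~` Kb r)) //; first last.
- by move=> y _; rewrite lee_fin ynorm_ge0.
- by apply/measurable_realfun.measurable_EFinP; exact: measurable_ynorm.
- exact: measurable_nKb.
rewrite setTD setCK.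
apply: (@le_trans _ _ (\int[P]_(x in Kb r) (cst r%:E) x)%E).
  apply: ge0_le_integral => //.
  - exact: measurable_Kb.
  - by move=> y _; rewrite lee_fin ynorm_ge0.
  - by apply/measurable_realfun.measurable_EFinP/measurable_funTS; exact: measurable_ynorm.
  - by move=> y [_ By]; rewrite lee_fin.
rewrite integral_cst; last exact: measurable_Kb.
rewrite -[leRHS]mule1 lee_wpmul2l ?lee_fin //.
by apply: probability_le1; exact: measurable_Kb.
Qed.

Lemma inP1_of_inPK (P : Prob R d n) r : 0 <= r -> inPK P (ballY r) ->
  inP1 P /\ m1 P <= r.
Proof.
move=> r_ge0 P_supp; have m1_le := m1e_le r_ge0 P_supp.
have m1_ge0 : (0 <= m1e P)%E by apply: integral_ge0 => y _; rewrite lee_fin ynorm_ge0.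
have m1_fin : m1e P \is a fin_num by rewrite ge0_fin_numE // (le_lt_trans m1_le (ltry _)).
split; last by rewrite /m1 -lee_fin fineK.
split; last exact: le_lt_trans m1_le (ltry _).
apply: (null_outside_support (r := r)) => //.
  by apply: measurableC; exact: measurable_Yset.
by move=> y Yy [].
Qed.

Lemma m1_ge0 (P : Prob R d n) : 0 <= m1 P.
Proof. by apply/fine_ge0/integral_ge0 => y _; rewrite lee_fin ynorm_ge0. Qed.

End Support.

Section Growth.
Variables (R : realType) (r0 M : R).
Hypotheses (r0_ge0 : 0 <= r0) (M_ge0 : 0 <= M).

(* The solution of r' = M (1 + 2 r), r(0) = r0: it bounds the radius of the
   support of the scheme, whose explicit Euler steps it dominates. *)
Definition growth (t : R) : R := ((1 + 2 * r0) * expR (2 * M * t) - 1) / 2.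

Lemma growth0 : growth 0 = r0.
Proof. by rewrite /growth mulr0 expR0 mulr1; field. Qed.

Lemma growth_mono (a b : R) : a <= b -> growth a <= growth b.
Proof.
move=> ab; have c_gt0 : 0 < 1 + 2 * r0 by rewrite ltr_pwDl // mulr_ge0.
by rewrite /growth ler_pM2r // lerD2r ler_pM2l // ler_expR ler_wpM2l // mulr_ge0.
Qed.

Lemma growth_ge0 (a : R) : 0 <= a -> 0 <= growth a.
Proof. by move=> a_ge0; rewrite (le_trans r0_ge0) // -growth0 growth_mono. Qed.

Lemma growth_euler (a s : R) : 0 <= s -> growth a + s * (M * (1 + 2 * growth a)) <= growth (a + s).
Proof.
move=> s_ge0.
have -> : 1 + 2 * growth a = (1 + 2 * r0) * expR (2 * M * a) by rewrite /growth; field.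
rewrite /growth mulrDr expRD.
have := expR_ge1Dx (2 * M * s); have := expR_gt0 (2 * M * a).
set A := expR (2 * M * a); set B := expR (2 * M * s) => A_gt0 B_ge.
have cA_ge0 : 0 <= (1 + 2 * r0) * A by apply: mulr_ge0 (ltW A_gt0); have := r0_ge0; lra.
by rewrite ler_pdivlMr // mulrDl divfK //; nra.
Qed.

Lemma growth_continuous : continuous growth.
Proof.
move=> t; apply: cvgM; last exact: cvg_cst.
apply: cvgB; last exact: cvg_cst.
apply: cvgM; first exact: cvg_cst.
apply: (@continuous_comp _ _ _ (fun t => 2 * M * t) expR); last exact: continuous_expR.
by apply: cvgM; [exact: cvg_cst | exact: cvg_id].
Qed.

End Growth.

Section Scheme.
Variables (R : realType) (n d : nat).
Hypothesis n_gt0 : (0 < n)%N.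
Local Notation Y := (Yt R d n).
Local Notation YM := (Ym R d n).
Local Notation Kb := (@Kb R d n).

Variable v : Prob R d n -> Y -> 'rV[R]_d.
Hypothesis v_lip : forall r : R, exists Lv : R, forall (P : Prob R d n) (y1 y2 : Y),
  inPK P (ballY r) -> Kb r y1 -> Kb r y2 -> enorm (v P y1 - v P y2) <= Lv * ydist y1 y2.
Variable Mv : R.
Hypothesis v_growth : forall (P : Prob R d n) (y : Y), inP1 P -> Yset y ->
  enorm (v P y) <= Mv * (1 + ynorm y + m1 P).

(* the scheme: time steps tau_k, curves Psi^k(t) = PsiC k t, measures
   tilde Psi^k_{i+1} = PsiT k i.+1 and the minimizers lambda^new = lnew k i *)
Variable tau : nat -> R.
Hypothesis tau_gt0 : forall k, 0 < tau k.
Variables (PsiC : nat -> R -> Prob R d n) (PsiT : nat -> nat -> Prob R d n)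
  (lnew : nat -> nat -> Y -> 'rV[R]_n).
Hypothesis lnew_csimplex : forall k i (y : Y), Yset y -> csimplex (lnew k i y).
Hypothesis lnew_meas : forall k i, measurable_fun (@Yset R d n : set YM)
  (fun y : YM => ((y.1, lnew k i y) : YM)).
(* tilde Psi^k_{i+1} and Psi^k(t) are push-forwards of Psi^k_i *)
Hypothesis PsiT_def : forall k i (A : set YM), measurable A ->
  PsiT k i.+1 A = PsiC k (tk tau k i) (@Yset R d n `&` ((fun y : Y => (y.1, lnew k i y)) @^-1` A)).
Hypothesis PsiC_def : forall k i (t : R), tk tau k i <= t <= tk tau k i.+1 ->
  forall A : set YM, measurable A ->
  PsiC k t A = PsiC k (tk tau k i)
    (@Yset R d n `&` ((fun y : Y => (Xmap tau lnew v PsiT k i t y, Lam tau lnew k i t y)) @^-1` A)).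

Local Notation update k i := (fun y : Y => (y.1, lnew k i y)).

Lemma tk_ge0 k i : 0 <= tk tau k i.
Proof. by rewrite /tk mulr_ge0 // ltW. Qed.

Lemma tkS k i : tk tau k i.+1 = tk tau k i + tau k.
Proof. by rewrite /tk -addn1 natrD mulrDl mul1r. Qed.

Lemma tk_step k i : tk tau k i.+1 - tk tau k i = tau k.
Proof. by rewrite tkS addrC addKr. Qed.

Lemma Lam_end k i (y : Y) : Lam tau lnew k i (tk tau k i.+1) y = lnew k i y.
Proof.
rewrite /Lam tk_step divff ?lt0r_neq0 //.
by rewrite scale1r addrC subrK.
Qed.

(* The lambda-update keeps points of Y in Y and does not move x, so it
   preserves Kb r. *)
Lemma update_Kb k i r (y : Y) : Kb r y -> Kb r (update k i y).
Proof.
move=> Ky; have Yu : Yset (update k i y) by exact: lnew_csimplex (proj1 Ky).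
by move: Ky; rewrite !(KbE _ n_gt0) => -[_ Ky]; split.
Qed.

Lemma support_tilde k i r :
  inPK (PsiC k (tk tau k i)) (ballY r) -> inPK (PsiT k i.+1) (ballY r).
Proof.
move=> supp; rewrite /inPK /supported_in PsiT_def; last exact: measurable_nKb.
apply: (null_outside_support n_gt0 (r := r)) => //.
  exact (lnew_meas k i (@measurable_Yset R d n) (measurable_nKb n_gt0 r)).
by move=> y [Yy not_Ku] Ky; apply/not_Ku/update_Kb.
Qed.

(* The interpolated lambda is a convex combination of two points of the
   closed simplex, so the scheme does not leave Y. *)
Lemma Lam_Yset k i t (y : Y) : tk tau k i <= t <= tk tau k i.+1 -> Yset y ->
  csimplex (Lam tau lnew k i t y).
Proof.
move=> /andP[t_ge t_le] Yy; have [lnew_ge0 lnew_sum] := lnew_csimplex k i Yy.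
have [y_ge0 y_sum] := Yy; rewrite tkS in t_le.
have taup := tau_gt0 k.
have c_ge0 : 0 <= (t - tk tau k i) / tau k by rewrite divr_ge0 ?subr_ge0 // ltW.
have c_le1 : (t - tk tau k i) / tau k <= 1 by rewrite ler_pdivrMr // mul1r; lra.
rewrite /Lam; move: c_ge0 c_le1; set c := _ / tau k => c_ge0 c_le1.
split => [h|]; first by rewrite !mxE; move: (y_ge0 h) (lnew_ge0 h); nra.
rewrite (eq_bigr (fun h => y.2 ord0 h + c * (lnew k i y ord0 h - y.2 ord0 h))); last first.
  by move=> h _; rewrite !mxE.
by rewrite big_split /= -mulr_sumr sumrB y_sum lnew_sum subrr mulr0 addr0.
Qed.

(* (v1) makes the coordinates of v_P measurable on Y when P has bounded
   support, since they are locally Lipschitz. *)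
Lemma v_coord_meas (P : Prob R d n) r : 0 <= r -> inPK P (ballY r) ->
  forall j, measurable_fun (@Yset R d n : set YM) (fun y : YM => v P y ord0 j).
Proof.
move=> r_ge0 supp j; apply: measurable_fun_loclip; first exact: measurable_Yset.
move=> y Yy; have yn_ge0 := ynorm_ge0 y.
have [Lv vL] := v_lip (r + ynorm y + 1).
have supp' : inPK P (ballY (r + ynorm y + 1)) by apply: (inPK_mono n_gt0 _ supp); lra.
have k_gt0 : 0 < (d + n)%:R + 1 :> R by rewrite ltr_pwDr.
exists `|Lv|; exists (1 / ((d + n)%:R + 1)); first by rewrite divr_gt0.
move=> z Yz bz.
have dist_le1 : l1dist y z <= 1.
  by rewrite (le_trans (l1dist_ball bz)) // mul1r ler_pdivrMr // mul1r lerDl.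
have Ky : Kb (r + ynorm y + 1) y by split => //; rewrite /ballY /=; lra.
have Kz : Kb (r + ynorm y + 1) z.
  split => //; rewrite /ballY /= (ynorm_Yset n_gt0 Yz).
  have := enorm_le_add_dist z.1 y.1; have := enorm_fst_le_l1dist y z.
  move: (ynorm_Yset n_gt0 Yy); lra.
have := coord_le_enorm (v P z - v P y) j; rewrite !mxE => /le_trans; apply.
apply: le_trans (vL _ _ _ supp' Kz Ky) _.
have yd_ge0 : 0 <= ydist z y by rewrite /ydist addr_ge0 ?enorm_ge0 ?blnorm_ge0.
apply: le_trans (ler_wpM2r yd_ge0 (ler_norm Lv)) _.
by rewrite ler_wpM2l // ydist_le_l1dist.
Qed.

Lemma displacement_meas k i r (s : R) : 0 <= r -> inPK (PsiT k i.+1) (ballY r) ->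
  measurable_fun (@Yset R d n : set YM)
    (fun y : YM => enorm ((y : Y).1 + s *: v (PsiT k i.+1) (update k i y))).
Proof.
move=> r_ge0 supp; apply: measurable_enorm_comp => j.
have -> : (fun y : YM => ((y : Y).1 + s *: v (PsiT k i.+1) (update k i y)) ord0 j) =
    (fun y : YM => (y : Y).1 ord0 j
       + s * ((fun z : YM => v (PsiT k i.+1) z ord0 j) \o update k i) y).
  by apply/funext => y /=; rewrite !mxE.
apply: measurable_realfun.measurable_funD.
  by apply: measurable_funTS; exact: measurable_fst_coord.
apply: measurable_realfun.measurable_funM; first exact: measurable_cst.
apply: (measurable_comp (F := (@Yset R d n : set YM))).
- exact: measurable_Yset.
- by move=> _ [y Yy <-]; exact: lnew_csimplex.
- exact: v_coord_meas r_ge0 supp j.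
- exact: lnew_meas.
Qed.

Let M := Num.max Mv 0.

(* M is nonnegative, which makes the growth function nondecreasing. *)
Lemma M_ge0 : 0 <= M.
Proof. by rewrite le_max lexx orbT. Qed.

(* Moving x for a time s with velocity v_P(z), where z and P are supported in
   B^Y_r, enlarges |x| + 1 by at most s M (1 + 2 r), by (v3). *)
Lemma transport_bound (P : Prob R d n) r (y z : Y) (s : R) :
  inP1 P -> m1 P <= r -> Yset z -> ynorm z <= r -> enorm y.1 + 1 <= r -> 0 <= s ->
  enorm (y.1 + s *: v P z) + 1 <= r + s * (M * (1 + 2 * r)).
Proof.
move=> P1 m1_le Yz zn_le yn_le s_ge0.
have := enormD y.1 (s *: v P z); rewrite enormZ ger0_norm //.
have v_le := v_growth P1 Yz.
have m1P_ge0 := m1_ge0 P; have zn_ge0 := ynorm_ge0 z; have := M_ge0.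
have v_ge0 := enorm_ge0 (v P z).
have Mv_le : Mv * (1 + ynorm z + m1 P) <= M * (1 + 2 * r).
  rewrite (@le_trans _ _ (M * (1 + ynorm z + m1 P))) //.
    by rewrite ler_wpM2r ?le_max ?lexx //; lra.
  by rewrite ler_wpM2l ?M_ge0 //; lra.
nra.
Qed.

Lemma support_curve k i r t : 0 <= r -> inPK (PsiC k (tk tau k i)) (ballY r) ->
  tk tau k i <= t <= tk tau k i.+1 ->
  inPK (PsiC k t) (ballY (r + (t - tk tau k i) * (M * (1 + 2 * r)))).
Proof.
move=> r_ge0 supp t_in.
set s := t - tk tau k i; set r' := r + s * _.
have s_ge0 : 0 <= s by rewrite subr_ge0; case/andP: t_in.
have supp_T := support_tilde supp.
have [P1 m1_le] := inP1_of_inPK n_gt0 r_ge0 supp_T.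
rewrite /inPK /supported_in (PsiC_def t_in); last exact: measurable_nKb.
set F := fun y : Y => (Xmap tau lnew v PsiT k i t y, Lam tau lnew k i t y).
have XE y : (F y).1 = y.1 + s *: v (PsiT k i.+1) (update k i y).
  by rewrite /F /= /Xmap Lam_end.
have FY y : Yset y -> Yset (F y) by exact: Lam_Yset t_in.
(* the points sent outside Kb r' are those whose x is moved too far *)
have escapeE : @Yset R d n `&` F @^-1` (~` Kb r') = @Yset R d n `&`
    (fun y : YM => enorm ((y : Y).1 + s *: v (PsiT k i.+1) (update k i y)))
      @^-1` `]r' - 1, +oo[%classic.
  apply/seteqP; split => y [Yy Fy]; split => //=.
    rewrite in_itv /= andbT -XE ltNge; apply/negP => F_le; apply: Fy.
    by rewrite (KbE _ n_gt0); split; [exact: FY | rewrite /=; lra].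
  move: Fy; rewrite /= in_itv /= andbT -XE (KbE _ n_gt0) => F_gt [_ /= F_le]; lra.
apply: (null_outside_support n_gt0 (r := r)) => //.
  rewrite escapeE; exact: (displacement_meas s r_ge0 supp_T (@measurable_Yset R d n)).
move=> y [Yy notK] Ky; suff : Kb r' (F y) by [].
rewrite (KbE _ n_gt0); split; first exact: FY.
have [Yu un_le] := update_Kb k i Ky.
move: Ky; rewrite (KbE _ n_gt0) => -[_ /= yn_le].
by change (enorm (F y).1 + 1 <= r'); rewrite XE; exact: transport_bound.
Qed.

Variables (Psihat : Prob R d n) (r0 : R).
Hypothesis r0_ge0 : 0 <= r0.
Hypothesis Psihat_supp : inPK Psihat (ballY r0).
Hypothesis PsiC0 : forall k (A : set YM), measurable A -> PsiC k 0 A = Psihat A.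

(* At the grid times the support radius is dominated by the growth function,
   by induction on i: each step is an Euler step of r' = M (1 + 2 r). *)
Lemma support_grid k i : inPK (PsiC k (tk tau k i)) (ballY (growth r0 M (tk tau k i))).
Proof.
elim: i => [|i IH].
  rewrite /tk mul0r growth0 /inPK /supported_in PsiC0 //; exact: measurable_nKb.
have g_ge0 := growth_ge0 r0_ge0 M_ge0 (tk_ge0 k i).
have t_in : tk tau k i <= tk tau k i.+1 <= tk tau k i.+1.
  by rewrite lexx andbT tkS lerDl ltW.
apply: (inPK_mono n_gt0 _ (support_curve g_ge0 IH t_in)).
by rewrite tk_step tkS; apply: growth_euler => //; exact: ltW.
Qed.

(* Between grid times the same bound holds, since t lies in some [t_i, t_{i+1}]. *)
Lemma support_curve_growth k t : 0 <= t -> inPK (PsiC k t) (ballY (growth r0 M t)).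
Proof.
move=> t_ge0; have tau_k := tau_gt0 k.
have [i [t_ge t_lt]] : exists i, tk tau k i <= t /\ t < tk tau k i.+1.
  exists (Num.truncn (t / tau k)).
  have /andP[lo hi] := truncn_itv (divr_ge0 t_ge0 (ltW tau_k)).
  by rewrite /tk -ler_pdivlMr // -ltr_pdivrMr.
have g_ge0 := growth_ge0 r0_ge0 M_ge0 (tk_ge0 k i).
have t_in : tk tau k i <= t <= tk tau k i.+1 by rewrite t_ge ltW.
apply: (inPK_mono n_gt0 _ (support_curve g_ge0 (support_grid k i) t_in)).
have := @growth_euler _ r0 M r0_ge0 (tk tau k i) (t - tk tau k i).
by rewrite (addrC (tk tau k i)) subrK subr_ge0; apply.
Qed.

Lemma support_radius : exists Rf : R -> R,
    (forall s, 0 <= s -> 0 <= Rf s) /\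
    (forall s1 s2, 0 <= s1 -> s1 < s2 -> Rf s1 < Rf s2) /\
    {within `[0, +oo[, continuous Rf} /\
    forall (T : R) (k : nat) (t : R), 0 <= T -> 0 <= t <= T ->
      inPK (PsiC k t) (ballY (Rf T)) /\
      (forall i, tk tau k i <= t < tk tau k i.+1 ->
         inPK (PsiC k (tk tau k i)) (ballY (Rf T))) /\
      (forall i, tk tau k i < t <= tk tau k i.+1 ->
         inPK (PsiT k i.+1) (ballY (Rf T))).
Proof.
pose Rf T := growth r0 M T + T.
have widen (P : Prob R d n) s T : 0 <= s -> s <= T ->
    inPK P (ballY (growth r0 M s)) -> inPK P (ballY (Rf T)).
  move=> s_ge0 s_le supp; apply: (inPK_mono n_gt0 _ supp).
  by have := growth_mono r0_ge0 M_ge0 s_le; rewrite /Rf; lra.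
exists Rf; split; [|split; [|split]].
- by move=> s s_ge0; have := growth_ge0 r0_ge0 M_ge0 s_ge0; rewrite /Rf; lra.
- by move=> s1 s2 _ s12; have := growth_mono r0_ge0 M_ge0 (ltW s12); rewrite /Rf; lra.
- apply: continuous_subspaceT => x.
  by apply: cvgD; [exact: growth_continuous | exact: cvg_id].
move=> T k t T_ge0 /andP[t_ge0 t_le]; split; [|split] => [|i /andP[t_ge _]|i /andP[t_gt _]].
- exact: widen t_ge0 t_le (support_curve_growth k t_ge0).
- exact: widen (tk_ge0 k i) (le_trans t_ge t_le) (support_grid k i).
- apply: support_tilde.
  exact: widen (tk_ge0 k i) (le_trans (ltW t_gt) t_le) (support_grid k i).
Qed.

End Scheme.

Theorem lemma5p7 (R : realType) (n d : nat) (hn : (2 <= n)%N) (hd : (1 <= d)%N)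
  (Q : 'rV[R]_d -> Prob R d n -> 'M[R]_n)
  (v : Prob R d n -> Yt R d n -> 'rV[R]_d)
  (* (Q0) *)
  (HQ0 : forall x (P : Prob R d n), inP1 P ->
     (forall h l, h != l -> 0 <= Q x P h l) /\
     (forall h, Q x P h h = - \sum_(l < n | l != h) Q x P l h))
  (* (Q1) *)
  (HQ1 : forall x (P : Prob R d n), inP1 P ->
     exists! s : 'rV[R]_n, simplex s /\ detailed_balance Q x P s)
  (* (Q2) *)
  (HQ2 : forall r : R, exists LQ : R, forall x1 x2 (P1 P2 : Prob R d n),
     ballR r x1 -> ballR r x2 -> inPK P1 (ballY r) -> inPK P2 (ballY r) ->
     mnorm (Q x1 P1 - Q x2 P2) <= LQ * (enorm (x1 - x2) + W1 P1 P2))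
  (* (Q3) *)
  (HQ3 : exists MQ : R, forall x (P : Prob R d n), inP1 P ->
     mnorm (Q x P) <= MQ * (1 + enorm x + m1 P))
  (* (v1), (v2) with a common constant L_{v,R} *)
  (Hv12 : forall r : R, exists Lv : R,
     (forall (P : Prob R d n) (y1 y2 : Yt R d n), inPK P (ballY r) ->
        (@Yset R d n `&` @ballY R d n r) y1 -> (@Yset R d n `&` @ballY R d n r) y2 ->
        enorm (v P y1 - v P y2) <= Lv * ydist y1 y2) /\
     (forall (P1 P2 : Prob R d n) (y : Yt R d n), inPK P1 (ballY r) ->
        inPK P2 (ballY r) -> (@Yset R d n `&` @ballY R d n r) y ->
        enorm (v P1 y - v P2 y) <= Lv * W1 P1 P2))
  (* (v3) *)
  (Hv3 : exists Mv : R, forall (P : Prob R d n) (y : Yt R d n), inP1 P -> @Yset R d n y ->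
     enorm (v P y) <= Mv * (1 + ynorm y + m1 P))
  (* time steps *)
  (tau : nat -> R) (Htau_pos : forall k, 0 < tau k) (Htau_lim : tau @ \oo --> 0)
  (* initial datum in P_c(Y) *)
  (Psihat : Prob R d n) (HPsihat : inPc Psihat)
  (* the curves of the Markov alternate scheme:
       PsiC k t = Psi^k(t) (t >= 0), so that Psi^k_i = PsiC k (t^k_i);
       PsiT k i.+1 = tilde Psi^k_{i+1};  lnew k i = lambda^new built from Psi^k_i *)
  (PsiC : nat -> R -> Prob R d n)
  (PsiT : nat -> nat -> Prob R d n)
  (lnew : nat -> nat -> Yt R d n -> 'rV[R]_n)
  (Hinit : forall k (A : set (Ym R d n)), measurable A -> PsiC k 0 A = Psihat A)
  (Hmin : forall k i (y : Yt R d n), Yset y ->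
     csimplex (lnew k i y) /\
     forall rho : 'rV[R]_n, csimplex rho ->
       Ent Q y.1 (lnew k i y) (PsiC k (tk tau k i))
         + dbar Q y.1 (PsiC k (tk tau k i)) (lnew k i y) y.2 ^+ 2 / (2 * tau k)
       <= Ent Q y.1 rho (PsiC k (tk tau k i))
         + dbar Q y.1 (PsiC k (tk tau k i)) rho y.2 ^+ 2 / (2 * tau k))
  (Hmeas : forall k i, measurable_fun (@Yset R d n : set (Ym R d n))
     (fun y : Ym R d n => ((y.1, lnew k i y) : Ym R d n)))
  (Htilde : forall k i (A : set (Ym R d n)), measurable A ->
     PsiT k i.+1 A =
       PsiC k (tk tau k i) (@Yset R d n `&` ((fun y : Yt R d n => (y.1, lnew k i y)) @^-1` A)))
  (Hcurve : forall k i (t : R), tk tau k i <= t <= tk tau k i.+1 ->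
     forall (A : set (Ym R d n)), measurable A ->
     PsiC k t A =
       PsiC k (tk tau k i) (@Yset R d n `&`
          ((fun y : Yt R d n => (Xmap tau lnew v PsiT k i t y, Lam tau lnew k i t y)) @^-1` A))) :
  exists Rf : R -> R,
    (forall s, 0 <= s -> 0 <= Rf s) /\
    (forall s1 s2, 0 <= s1 -> s1 < s2 -> Rf s1 < Rf s2) /\
    {within `[0, +oo[, continuous Rf} /\
    forall (T : R) (k : nat) (t : R), 0 <= T -> 0 <= t <= T ->
      (* Psi^k(t) *)
      inPK (PsiC k t) (ballY (Rf T)) /\
      (* underline Psi^k(t) = Psi^k_i for t in [t_i, t_{i+1}) *)
      (forall i, tk tau k i <= t < tk tau k i.+1 ->
         inPK (PsiC k (tk tau k i)) (ballY (Rf T))) /\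
      (* tilde Psi^k(t) = tilde Psi^k_{i+1} for t in (t_i, t_{i+1}] *)
      (forall i, tk tau k i < t <= tk tau k i.+1 ->
         inPK (PsiT k i.+1) (ballY (Rf T))).
Proof.
have n_gt0 : (0 < n)%N by apply: leq_trans hn.
have [Mv v_growth] := Hv3.
have v_lip r : exists Lv : R, forall (P : Prob R d n) (y1 y2 : Yt R d n),
    inPK P (ballY r) -> Kb r y1 -> Kb r y2 -> enorm (v P y1 - v P y2) <= Lv * ydist y1 y2.
  by have [Lv [lip _]] := Hv12 r; exists Lv.
have lnew_csimplex k i (y : Yt R d n) : Yset y -> csimplex (lnew k i y).
  by move=> Yy; have [] := Hmin k i y Yy.
(* the support radius of the initial datum, made nonnegative *)
have [_ [r1 Psihat_supp]] := HPsihat.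
have r0_ge0 : 0 <= Num.max r1 0 by rewrite le_max lexx orbT.
have Psihat_supp0 : inPK Psihat (ballY (Num.max r1 0)).
  by apply: (inPK_mono n_gt0 _ Psihat_supp); rewrite le_max lexx.
exact: (support_radius n_gt0 v_lip v_growth Htau_pos lnew_csimplex Hmeas Htilde Hcurve
  r0_ge0 Psihat_supp0 Hinit).
Qed.
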